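(* Let $n^*_1,n^*_2\ge1$, $n^*=n^*_1+n^*_2$, and let $\psi$ be a log-convex Archimedean generator with $\phi=\psi^{-1}$. Let $X_1,\dots,X_{n^*}$ be dependent nonnegative random variables sharing an Archimedean copula with generator $\psi$, with $X_i\sim F_1(\lambda_1x)$ for $i\le n^*_1$ and $X_j\sim F_2(\lambda_2x)$ for $j>n^*_1$; let $Y_1,\dots,Y_{n^*}$ be dependent nonnegative random variables sharing an Archimedean copula with generator $\psi$, with $Y_i\sim F_1(\mu_1x)$ for $i\le n^*_1$ and $Y_j\sim F_2(\mu_2x)$ for $j>n^*_1$ ($\lambda_k,\mu_k>0$). Let $X_{n^*:n^*}(n^*_1,n^*_2)=\max_iX_i$, $Y_{n^*:n^*}(n^*_1,n^*_2)=\max_iY_i$, and write $\boldsymbol\lambda^*=(\lambda_1,\dots,\lambda_1,\lambda_2,\dots,\lambda_2)$, $\boldsymbol\mu^*=(\mu_1,\dots,\mu_1,\mu_2,\dots,\mu_2)$ (with $n^*_1$ copies of the first entry and $n^*_2$ of the second). Let either (a) $n^*_1\ge n^*_2$ and $\boldsymbol\lambda=(\lambda_1,\lambda_2),\boldsymbol\mu=(\mu_1,\mu_2)\in\mathcal E_+$, or (b) $n^*_1\le n^*_2$ and $\boldsymbol\lambda,\boldsymbol\mu\in\mathcal D_+$. Then: (i) if $\tilde r_1$ or $\tilde r_2$ is decreasing and $\tilde r_1(x)\ge\tilde r_2(x)$ for all $x>0$ in case (a) (respectively $\tilde r_1(x)\le\tilde r_2(x)$ for all $x>0$ in case (b)),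 then $\boldsymbol\lambda^*\succeq^w\boldsymbol\mu^*$ implies $Y_{n^*:n^*}(n^*_1,n^*_2)\le_{st}X_{n^*:n^*}(n^*_1,n^*_2)$; (ii) if $\tilde r_1=\tilde r_2=\tilde r$ and $\tilde r$ is decreasing, then $\boldsymbol\lambda^*\succeq^w\boldsymbol\mu^*$ implies $Y_{n^*:n^*}(n^*_1,n^*_2)\le_{st}X_{n^*:n^*}(n^*_1,n^*_2)$.
   Context: $Z\sim F(\lambda x)$ means $Z$ has distribution function $x\mapsto F(\lambda x)$. Archimedean copula: a generator is a continuous nonincreasing $\psi:[0,\infty)\to[0,1]$ with $\psi(0)=1$, $\psi(\infty)=0$, which is $m$-monotone; $\phi=\psi^{-1}$; $Z_1,\dots,Z_m$ with marginal distribution functions $G_i$ share an Archimedean copula with generator $\psi$ if $P(Z_1\le z_1,\dots,Z_m\le z_m)=\psi(\sum_i\phi(G_i(z_i)))$. $F_1,F_2$ are absolutely continuous distribution functions on $[0,\infty)$ with densities $f_k$ and reversed hazard rates $\tilde r_k=f_k/F_k$. $\mathcal E_+=\{(x_1,x_2):0<x_1\le x_2\}$, $\mathcal D_+=\{(x_1,x_2):x_1\ge x_2>0\}$. For $\boldsymbol a,\boldsymbol b\in\mathbb R^k$ with increasingly ordered coordinates: $\boldsymbol a\succeq^w\boldsymbol b$ means $\sum_{i=1}^lb_{(i)}\ge\sum_{i=1}^la_{(i)}$ for all $l$. $U\le_{st}V$ means $P(U>x)\le P(V>x)$ for all $x$. Increasing/decreasing are in the weak sense. *)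

From HB Require Import structures.
From mathcomp Require Import all_boot all_order all_algebra.
From mathcomp Require Import all_classical all_reals all_analysis.
Set Implicit Arguments. Unset Strict Implicit. Unset Printing Implicit Defensive.
Import Order.TTheory GRing.Theory Num.Theory.
Import numFieldNormedType.Exports.
Local Open Scope classical_set_scope.
Local Open Scope ring_scope.

Definition convex_pos {R : realType} (g : R -> R) : Prop :=
  forall x y t : R, 0 < x -> 0 < y -> 0 <= t <= 1 ->
    g (t * x + (1 - t) * y) <= t * g x + (1 - t) * g y.

(* m-monotonicity on [0,oo) (McNeil--Neslehova): psi is continuous on [0,oo),
   differentiable on (0,oo) up to order m-2, (-1)^k psi^(k) >= 0 on (0,oo) for
   k = 0..m-2, and (-1)^(m-2) psi^(m-2) is nonincreasing and convex on (0,oo). *)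
Definition m_monotone {R : realType} (m : nat) (psi : R -> R) : Prop :=
  {within `[0, +oo[, continuous psi} /\
  (forall k : nat, (k < m - 2)%N -> forall x : R, 0 < x ->
      derivable (derive1n k psi) x 1) /\
  (forall k : nat, (k <= m - 2)%N -> forall x : R, 0 < x ->
      0 <= (-1) ^+ k * derive1n k psi x) /\
  (forall x y : R, 0 < x -> x <= y ->
      (-1) ^+ (m - 2) * derive1n (m - 2) psi y
        <= (-1) ^+ (m - 2) * derive1n (m - 2) psi x) /\
  convex_pos (fun x => (-1) ^+ (m - 2) * derive1n (m - 2) psi x).

Definition arch_generator {R : realType} (m : nat) (psi : R -> R) : Prop :=
  {within `[0, +oo[, continuous psi} /\
  (forall x y : R, 0 <= x -> x <= y -> psi y <= psi x) /\
  (forall x : R, 0 <= x -> 0 <= psi x <= 1) /\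
  psi 0 = 1 /\
  psi x @[x --> +oo] --> (0:R) /\
  m_monotone m psi.

Definition log_convex {R : realType} (psi : R -> R) : Prop :=
  (forall x : R, 0 <= x -> 0 < psi x) /\
  (forall x y t : R, 0 <= x -> 0 <= y -> 0 <= t <= 1 ->
     ln (psi (t * x + (1 - t) * y)) <= t * ln (psi x) + (1 - t) * ln (psi y)).

(* phi is the inverse of psi (psi being strictly positive, phi is defined on (0,1]). *)
Definition is_inverse_gen {R : realType} (psi phi : R -> R) : Prop :=
  (forall t : R, 0 <= t -> phi (psi t) = t) /\
  (forall u : R, 0 < u <= 1 -> 0 <= phi u /\ psi (phi u) = u).

Definition abs_cont_df {R : realType} (F f : R -> R) : Prop :=
  measurable_fun setT f /\
  (forall x : R, 0 <= f x) /\
  (forall x : R, x < 0 -> F x = 0) /\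
  (forall x : R, 0 <= x ->
     (\int[lebesgue_measure]_(y in `[0%R, x]%classic) (f y)%:E)%E = (F x)%:E) /\
  F x @[x --> +oo] --> (1:R).

Definition rev_hazard {R : realType} (F f : R -> R) (x : R) : R := f x / F x.

Definition decreasing_pos {R : realType} (g : R -> R) : Prop :=
  forall x y : R, 0 < x -> x <= y -> g y <= g x.

(* Marginal df of the i-th variable: F1(l1 x) for i < n1, F2(l2 x) otherwise
   (indices are 0-based: i < n1 corresponds to the paper's i <= n1). *)
Definition mix_df {R : realType} (F1 F2 : R -> R) (n1 : nat) (l1 l2 : R)
    (i : nat) (x : R) : R :=
  if (i < n1)%N then F1 (l1 * x) else F2 (l2 * x).

(* The copula identity is required where all G_i(z_i) > 0;
   when some G_i(z_i) = 0 both sides vanish (psi(+oo) = 0, and the joint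
   probability is 0 by the marginal condition). *)
Definition arch_copula_model {R : realType} {d : measure_display}
    {T : measurableType d} (P : probability T R) (n : nat)
    (X : 'I_n -> T -> R) (G : nat -> R -> R) (psi phi : R -> R) : Prop :=
  (forall i : 'I_n, measurable_fun setT (X i)) /\
  (forall (i : 'I_n) (x : R), P [set t | X i t <= x] = (G i x)%:E) /\
  (forall z : 'I_n -> R, (forall i : 'I_n, 0 < G i (z i)) ->
     P [set t | forall i : 'I_n, X i t <= z i]
       = (psi (\sum_(i < n) phi (G i (z i))))%:E).

Definition maxRV {R : realType} {T : Type} (n : nat) (X : 'I_n -> T -> R)
    (t : T) : R := \big[Num.max/0]_(i < n) X i t.

Definition wsupmaj {R : realType} (a b : seq R) : Prop :=
  size a = size b /\
  forall l : nat, (l <= size a)%N ->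
    \sum_(i < l) nth 0 (sort <=%R a) i <= \sum_(i < l) nth 0 (sort <=%R b) i.

Definition st_le {R : realType} {d1 d2 : measure_display}
    {T1 : measurableType d1} {T2 : measurableType d2}
    (P1 : probability T1 R) (U : T1 -> R)
    (P2 : probability T2 R) (V : T2 -> R) : Prop :=
  forall x : R, (P1 [set t | (x < U t)%R] <= P2 [set t | (x < V t)%R])%E.

(* For x >= 0, P(max Y <= x) = psi (sum_i phi (G^Y_i x)), so since psi is
   nonincreasing it suffices to show
     n1 phi(F1(m1 x)) + n2 phi(F2(m2 x)) <= n1 phi(F1(l1 x)) + n2 phi(F2(l2 x)).
   Weak supermajorization gives l1 <= m1 and n1 l1 + n2 l2 <= n1 m1 + n2 m2
   (case (a); case (b) is symmetric).  If l2 <= m2 we conclude by monotonicity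
   of phi.  Otherwise the excess n2 (l2 - m2) of the second group is traded
   against a shift of the first group from l1 to a <= m1: the reversed hazard
   rates are sandwiched by a decreasing rate rho, which bounds the log-increments
   of F2 on [m2 x, l2 x] from above and those of F1 on [l1 x, a x] from below,
   and forces F1 <= F2; the exchange is then paid for by the convexity of
   v |-> phi (exp (- v)), which is the log-convexity of psi. *)

From HB Require Import structures.
From mathcomp Require Import all_boot all_order all_algebra.
From mathcomp Require Import all_classical all_reals all_analysis.
From mathcomp Require Import ring lra measurable_realfun.
Import Order.TTheory GRing.Theory Num.Theory.
Import numFieldNormedType.Exports.
Local Open Scope ring_scope.

Section ln_increment.
Context {R : realType}.

Lemma ln_sub_le_ratio {x y : R} : 0 < x -> 0 < y -> ln y - ln x <= y / x - 1.
Proof.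
move=> x0 y0; rewrite -ln_div ?posrE //.
have h : -1 < y / x - 1 by rewrite ltrBrDl subrr divr_gt0.
by have := le_ln1Dx h; rewrite addrC subrK.
Qed.

Lemma ln_increment_le_step {a b u : R} : 0 < a -> 0 < b -> 0 <= u -> u <= 1/2 ->
  b * (1 - u) <= a -> ln b - ln a <= u + 2 * u ^+ 2.
Proof.
move=> a0 b0 u0 u1 h.
apply: le_trans (ln_sub_le_ratio a0 b0) _.
rewrite lerBlDl ler_pdivrMr //.
have h1 : 0 < 1 - u by lra.
have e : (1 + (u + 2 * u ^+ 2)) * (1 - u) = 1 + u ^+ 2 * (1 - 2 * u).
  by rewrite !expr2; ring.
have h2 : 1 <= (1 + (u + 2 * u ^+ 2)) * (1 - u).
  by rewrite e lerDl mulr_ge0 ?sqr_ge0 //; lra.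
have : b * (1 - u) <= a * ((1 + (u + 2 * u ^+ 2)) * (1 - u)).
  by apply: le_trans h _; rewrite ler_peMr //; lra.
by move=> H; rewrite -(ler_pM2r h1) (le_trans H) // mulrA [a * _]mulrC.
Qed.

Lemma ln_increment_ge_step {a b v : R} : 0 < a -> 0 < b -> 0 <= v ->
  a * (1 + v) <= b -> v - v ^+ 2 <= ln b - ln a.
Proof.
move=> a0 b0 v0 h.
have := ln_sub_le_ratio b0 a0.
have hv : 0 < 1 + v by lra.
have e : (1 - v + v ^+ 2) * (1 + v) = 1 + v ^+ 3 by rewrite !exprS expr0; ring.
suff : a / b <= 1 - v + v ^+ 2 by lra.
rewrite ler_pdivrMr // -(ler_pM2r hv) mulrAC e (le_trans h) //.
by rewrite ler_peMl ?(ltW b0) // lerDl exprn_ge0.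
Qed.

Section comparison.
Variables (s t : R) (Fhi Flo rho : R -> R).
Hypotheses (st : s <= t)
  (F_gt0 : forall y, s <= y -> y <= t -> 0 < Fhi y /\ 0 < Flo y)
  (rho_noninc : forall a b, s <= a -> a <= b -> b <= t -> rho b <= rho a)
  (rho_ge0 : forall y, s <= y -> y <= t -> 0 <= rho y)
  (hi_step : forall a b, s <= a -> a <= b -> b <= t ->
     Fhi a * (1 + rho b * (b - a)) <= Fhi b)
  (lo_step : forall a b, s <= a -> a <= b -> b <= t ->
     Flo b * (1 - rho a * (b - a)) <= Flo a).

(* Summing the one-step bounds over a mesh of N steps, the rho terms telescope
   and the quadratic errors add up to O(1/N). *)
Lemma ln_increment_cmp_mesh {N : nat} : (0 < N)%N ->
  rho s * ((t - s) / N%:R) <= 1/2 ->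
  (ln (Flo t) - ln (Flo s)) - (ln (Fhi t) - ln (Fhi s)) <=
    (rho s - rho t) * ((t - s) / N%:R) + N%:R * (3 * (rho s * ((t - s) / N%:R)) ^+ 2).
Proof.
move=> N0 small; set h := (t - s) / N%:R; set q := rho s * h.
have h0 : 0 <= h by rewrite divr_ge0 ?subr_ge0.
have hN : N%:R * h = t - s by rewrite /h mulrC divfK // pnatr_eq0 -lt0n.
pose y (k : nat) := s + k%:R * h.
have y_in k : (k <= N)%N -> s <= y k /\ y k <= t.
  move=> kN; split; first by rewrite /y lerDl mulr_ge0.
  by rewrite /y -lerBrDl -hN ler_wpM2r // ler_nat.
have q0 : 0 <= q by rewrite mulr_ge0 // rho_ge0.
suff: forall k, (k <= N)%N ->
    (ln (Flo (y k)) - ln (Flo s)) - (ln (Fhi (y k)) - ln (Fhi s)) <=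
    (rho s - rho (y k)) * h + k%:R * (3 * q ^+ 2).
  by move=> /(_ N (leqnn N)); rewrite /y hN subrKC.
elim=> [|k IH] kN.
  by rewrite /y !mul0r addr0 !subrr mul0r; lra.
have [ya yat] := y_in _ (ltnW kN); have [yb1 ybt] := y_in _ kN.
have yab : y k <= y k.+1 by rewrite /y lerD2l ler_wpM2r // ler_nat.
have hab : y k.+1 - y k = h by rewrite /y -natr1; ring.
have [Fhi_a Flo_a] := F_gt0 _ ya yat.
have [Fhi_b Flo_b] := F_gt0 _ (le_trans ya yab) ybt.
have rab := rho_noninc _ _ ya yab ybt.
have rsa := rho_noninc _ _ (lexx s) ya yat.
set u := rho (y k) * h; set v := rho (y k.+1) * h.
have u0 : 0 <= u by rewrite mulr_ge0 ?rho_ge0.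
have v0 : 0 <= v by rewrite mulr_ge0 ?rho_ge0 // (le_trans ya yab).
have uq : u <= q by rewrite ler_wpM2r.
have vu : v <= u by rewrite ler_wpM2r.
have up := ln_increment_le_step Flo_a Flo_b u0 (le_trans uq small).
have low := ln_increment_ge_step Fhi_a Fhi_b v0.
move: (lo_step _ _ ya yab ybt) (hi_step _ _ ya yab ybt); rewrite hab => /up{}up /low{}low.
have uq2 : u ^+ 2 <= q ^+ 2 by rewrite ler_pXn2r // nnegrE.
have vq2 : v ^+ 2 <= q ^+ 2 by rewrite ler_pXn2r // ?nnegrE // (le_trans vu).
have := IH (ltnW kN); rewrite -natr1 /u /v in uq2 vq2 up low *.
lra.
Qed.

Lemma ln_increment_cmp : ln (Flo t) - ln (Flo s) <= ln (Fhi t) - ln (Fhi s).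
Proof.
rewrite -subr_le0; set D := _ - _.
rewrite leNgt; apply/negP => D0.
set C := (rho s - rho t) * (t - s) + 3 * rho s ^+ 2 * (t - s) ^+ 2.
have rs0 := rho_ge0 _ (lexx s) st.
have C0 : 0 <= C.
  by rewrite /C addr_ge0 ?mulr_ge0 ?subr_ge0 ?sqr_ge0 ?rho_noninc.
set K := C / D + 2 * rho s * (t - s).
have K0 : 0 <= K by rewrite /K addr_ge0 ?divr_ge0 ?(ltW D0) // !mulr_ge0 // subr_ge0.
have KN := archi_boundP K0; set N := Num.bound K in KN.
have N0 : (0 < N)%N by rewrite -(ltr_nat R); apply: le_lt_trans KN.
have Nr : 0 < N%:R :> R by rewrite ltr0n.
have small : rho s * ((t - s) / N%:R) <= 1/2.
  rewrite mulrA ler_pdivrMr //.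
  have : 2 * rho s * (t - s) <= N%:R.
    by apply/ltW/(le_lt_trans _ KN); rewrite /K lerDr divr_ge0 // ltW.
  nra.
have := ln_increment_cmp_mesh N0 small; rewrite -/D.
have -> : (rho s - rho t) * ((t - s) / N%:R) +
    N%:R * (3 * (rho s * ((t - s) / N%:R)) ^+ 2) = C / N%:R.
  by rewrite /C; field; rewrite gt_eqF.
rewrite ler_pdivlMr // => H.
have : C / D < N%:R.
  by apply: le_lt_trans KN; rewrite /K lerDl !mulr_ge0 ?subr_ge0.
rewrite ltr_pdivrMr // => H2.
by have := le_lt_trans H H2; rewrite mulrC ltxx.
Qed.

End comparison.

Lemma expR_mul1B_le1 (x : R) : expR x * (1 - x) <= 1.
Proof.
have e : expR x * expR (- x) = 1 by rewrite -expRD subrr expR0.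
have h := expR_ge1Dx (- x).
by rewrite -e ler_wpM2l ?expR_ge0 //; lra.
Qed.

(* Compare with y |-> expR (c * y), which grows at exactly the constant rate c. *)
Lemma ln_increment_ge_rate (F : R -> R) (s t c : R) : s <= t -> 0 <= c ->
  (forall y, s <= y -> y <= t -> 0 < F y) ->
  (forall a b, s <= a -> a <= b -> b <= t -> F a * (1 + c * (b - a)) <= F b) ->
  c * (t - s) <= ln (F t) - ln (F s).
Proof.
move=> st c0 F_gt0 F_step.
have := @ln_increment_cmp s t F (fun y => expR (c * y)) (fun _ => c) st
  (fun y sy yt => conj (F_gt0 y sy yt) (expR_gt0 _))
  (fun _ _ _ _ _ => lexx c) (fun _ _ _ => c0) F_step.
rewrite !expRK -mulrBr; apply => a b _ ab _.
have -> : c * b = c * a + c * (b - a) by ring.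
by rewrite expRD -mulrA ler_piMr ?expR_ge0 ?expR_mul1B_le1.
Qed.

Lemma ln_increment_le_rate (F : R -> R) (s t c : R) : s <= t -> 0 <= c ->
  (forall y, s <= y -> y <= t -> 0 < F y) ->
  (forall a b, s <= a -> a <= b -> b <= t -> F b * (1 - c * (b - a)) <= F a) ->
  ln (F t) - ln (F s) <= c * (t - s).
Proof.
move=> st c0 F_gt0 F_step.
have := @ln_increment_cmp s t (fun y => expR (c * y)) F (fun _ => c) st
  (fun y sy yt => conj (expR_gt0 _) (F_gt0 y sy yt))
  (fun _ _ _ _ _ => lexx c) (fun _ _ _ => c0).
rewrite !expRK -mulrBr; apply => // a b _ ab _.
have -> : c * b = c * a + c * (b - a) by ring.
by rewrite expRD ler_wpM2l ?expR_ge0 ?expR_ge1Dx.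
Qed.

End ln_increment.

Section abs_cont_df.
Local Open Scope classical_set_scope.
Context {R : realType}.
Local Notation mu := (@lebesgue_measure R).
Context {F f : R -> R}.
Hypothesis hF : abs_cont_df F f.

Let f_ge0 x : 0 <= f x. Proof. by case: hF => _ []. Qed.

Let f_measurable (D : set R) : measurable_fun D (EFin \o f).
Proof. by apply/measurable_EFinP; exact: measurable_funS hF.1. Qed.

Let mu_itv_oc a b : a < b -> mu `]a, b] = (b - a)%:E.
Proof. by move=> ab; rewrite lebesgue_measure_itv /= lte_fin ab -EFinD. Qed.

Lemma df_ge0 x : 0 <= F x.
Proof.
have [_ [_ [F_neg [F_int _]]]] := hF.
have [x0|x0] := ltP x 0; first by rewrite F_neg.
by rewrite -lee_fin -F_int // integral_ge0 // => y _; rewrite lee_fin.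
Qed.

Lemma df_integral {a b} : 0 <= a -> a <= b ->
  (\int[mu]_(y in `]a, b]) (f y)%:E)%E = (F b - F a)%:E.
Proof.
move=> a0 ab; have [_ [_ [_ [F_int _]]]] := hF.
have int_ge0 : (0 <= \int[mu]_(y in `]a, b]) (f y)%:E)%E.
  by apply: integral_ge0 => y _; rewrite lee_fin.
have : (F b)%:E = ((F a)%:E + \int[mu]_(y in `]a, b]) (f y)%:E)%E.
  rewrite -F_int ?(le_trans a0 ab) // -F_int //.
  rewrite (@itv_bndbnd_setU _ _ (BLeft 0) (BRight a) (BRight b)) //.
  rewrite ge0_integral_setU //=; [exact: f_measurable | by move=> y _; rewrite lee_fin|].
  apply/disj_setPS => y [] /=; rewrite !in_itv /= => /andP [_ ya] /andP [ay _].
  by move: (lt_le_trans ay ya); rewrite ltxx.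
move: int_ge0; case: (\int[mu]_(y in _) _)%E => // r _ [->].
by congr (_%:E); ring.
Qed.

Lemma df_nondecreasing {a b} : a <= b -> F a <= F b.
Proof.
move=> ab; have [_ [_ [F_neg _]]] := hF.
have [a0|a0] := ltP a 0; first by rewrite F_neg // df_ge0.
rewrite -subr_ge0 -lee_fin -df_integral //.
by apply: integral_ge0 => y _; rewrite lee_fin.
Qed.

Lemma df0 : F 0 = 0.
Proof.
have [_ [_ [_ [F_int _]]]] := hF.
by apply/eqP; rewrite -(@eqe R) -F_int // set_itv1 integral_set1.
Qed.

Lemma df_le1 x : F x <= 1.
Proof.
have F_cvg := hF.2.2.2.2.
rewrite -(cvg_lim (@Rhausdorff R) F_cvg); apply: limr_ge; first by apply/cvg_ex; exists 1.
near=> y; apply: df_nondecreasing; near: y.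
by apply: nbhs_pinfty_ge; exact: num_real.
Unshelve. all: by end_near.
Qed.

Lemma df_increment_le {a b c} : 0 <= a -> a <= b -> 0 <= c ->
  (forall y, a < y -> y <= b -> f y <= c * F y) ->
  F b - F a <= c * (b - a) * F b.
Proof.
move=> a0 ab c0 f_le.
have [ab'|ba] := ltP a b; last first.
  have -> : a = b by apply/eqP; rewrite eq_le ab ba.
  by rewrite !subrr mulr0 mul0r.
rewrite -lee_fin -df_integral //.
apply: (@le_trans _ _ (\int[mu]_(y in `]a, b]) (cst (c * F b)%:E) y)%E).
  apply: ge0_le_integral => //; [by move=> y _; rewrite lee_fin | exact: f_measurable |].
  move=> y; rewrite /= in_itv /= => /andP [ay yb]; rewrite lee_fin.
  by apply: le_trans (f_le _ ay yb) _; rewrite ler_wpM2l // df_nondecreasing.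
rewrite integral_cst // -[X in (_ * X)%E]/(mu `]a, b]) mu_itv_oc // -EFinM lee_fin.
by rewrite mulrAC.
Qed.

Lemma df_increment_ge {a b c} : 0 <= a -> a <= b -> 0 <= c ->
  (forall y, a < y -> y <= b -> c * F y <= f y) ->
  c * (b - a) * F a <= F b - F a.
Proof.
move=> a0 ab c0 f_ge.
have [ab'|ba] := ltP a b; last first.
  have -> : a = b by apply/eqP; rewrite eq_le ab ba.
  by rewrite !subrr mulr0 mul0r.
rewrite -lee_fin -df_integral //.
apply: (@le_trans _ _ (\int[mu]_(y in `]a, b]) (cst (c * F a)%:E) y)%E); last first.
  apply: ge0_le_integral => //; [by move=> y _; rewrite lee_fin mulr_ge0 ?df_ge0 |
    exact: f_measurable |].
  move=> y; rewrite /= in_itv /= => /andP [ay yb]; rewrite lee_fin.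
  by apply: le_trans (f_ge _ ay yb); rewrite ler_wpM2l // df_nondecreasing // ltW.
rewrite integral_cst // -[X in (_ * X)%E]/(mu `]a, b]) mu_itv_oc // -EFinM lee_fin.
by rewrite mulrAC.
Qed.

(* F is the parameterized integral of f, hence left-continuous. *)
Lemma df_eq0_of_left_eq0 {q z} : 0 < q -> q < z ->
  (forall x, q < x -> x < z -> F x = 0) -> F z = 0.
Proof.
move=> q0 qz F_eq0; have [_ [_ [_ [F_int _]]]] := hF.
have z0 : 0 < z by apply: lt_trans qz.
have f_int : mu.-integrable `[0, z] (EFin \o f).
  apply/integrableP; split; first exact: f_measurable.
  under eq_integral => x _ do rewrite /comp abse_EFin ger0_norm ?f_ge0 //.
  by rewrite F_int ?ltW // ltry.
have := parameterized_integral_cvg_at_left z0 f_int.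
have -> : parameterized_integral mu 0 z f = F z.
  by rewrite /parameterized_integral /Rintegral F_int ?ltW.
move/cvg_unique; apply => //; apply: cvg_near_cst; near=> x.
have qx : q < x by near: x; exact: nbhs_left_gt.
have xz : x < z by near: x; exact: nbhs_left_lt.
by rewrite /parameterized_integral /Rintegral F_int /= ?F_eq0 // ltW ?(lt_trans q0).
Unshelve. all: by end_near.
Qed.

End abs_cont_df.

Section df_gt0.
Local Open Scope classical_set_scope.
Context {R : realType}.
Context {F f : R -> R}.
Hypothesis hF : abs_cont_df F f.

Lemma df_gt0_of_rate_le {q p c} : 0 < q -> q <= p -> 0 <= c ->
  (forall y, q < y -> y <= p -> 0 < F y -> f y <= c * F y) ->
  0 < F p -> 0 < F q.
Proof.
move=> q0 qp c0 f_le Fp_gt0.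
have F_ge0 := df_ge0 hF; have F_mono a b : a <= b -> F a <= F b := df_nondecreasing hF.
rewrite lt_def F_ge0 andbT; apply/eqP => Fq0.
pose Z := [set y | q <= y /\ y <= p /\ F y = 0].
have Zq : Z q by rewrite /Z /=; split => //; split.
have supZ : has_sup Z by split; [exists q | exists p => y [_ []]].
set z := sup Z.
have qz : q <= z by apply: sup_upper_bound.
have zp : z <= p by apply: ge_sup; [exists q | move=> y [_ []]].
have F_gt0_right y : z < y -> y <= p -> 0 < F y.
  move=> zy yp; rewrite lt_def F_ge0 andbT; apply/eqP => Fy0.
  have : Z y by split; [exact: le_trans qz (ltW zy) | split].
  by move/(sup_upper_bound supZ); rewrite leNgt zy.
have F_eq0_left y : q <= y -> y < z -> F y = 0.
  move=> qy yz; have yz' : 0 < z - y by rewrite subr_gt0.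
  have [e [_ [_ Fe0]] ye] := sup_adherent yz' supZ.
  rewrite opprB addrC subrK in ye.
  by apply/eqP; rewrite eq_le F_ge0 andbT -Fe0 F_mono // ltW.
have Fz0 : F z = 0.
  move: qz; rewrite le_eqVlt => /predU1P [<- // | qz].
  by apply: (df_eq0_of_left_eq0 hF q0 qz) => x qx; apply/F_eq0_left/ltW.
have zp' : z < p.
  rewrite lt_neqAle zp andbT; apply/eqP => zp_eq.
  by move: Fp_gt0; rewrite -zp_eq Fz0 ltxx.
pose d := Num.min (p - z) (1 / (c + 1)).
have d_gt0 : 0 < d by rewrite lt_min subr_gt0 zp' divr_gt0 //; lra.
have cd : c * d < 1.
  apply: le_lt_trans (_ : c * (1 / (c + 1)) < 1); first by rewrite ler_wpM2l // ge_min lexx orbT.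
  by rewrite mulrA mulr1 ltr_pdivrMr; lra.
have zb : z < z + d by rewrite ltrDl.
have bp : z + d <= p by rewrite -lerBrDl ge_min lexx.
have z0 : 0 <= z by apply: le_trans (ltW q0) qz.
have Fb_gt0 := F_gt0_right _ zb bp.
have f_le' y : z < y -> y <= z + d -> f y <= c * F y.
  move=> zy yb; have yp := le_trans yb bp.
  exact: f_le (le_lt_trans qz zy) yp (F_gt0_right _ zy yp).
have := df_increment_le hF z0 (ltW zb) c0 f_le'.
have -> : z + d - z = d by rewrite addrC addKr.
rewrite Fz0 subr0 -[X in X <= _]mul1r ler_pM2r //.
by rewrite leNgt cd.
Qed.

End df_gt0.

Section convex_slope.
Context {R : realType} {g : R -> R}.
Hypothesis g_convex : forall x y t : R, 0 <= x -> 0 <= y -> 0 <= t <= 1 ->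
  g (t * x + (1 - t) * y) <= t * g x + (1 - t) * g y.

Lemma convex_slope3 {a b c : R} : 0 <= a -> a <= b -> b <= c ->
  (g b - g a) * (c - b) <= (g c - g b) * (b - a).
Proof.
move=> a0 ab bc.
have [ac|ca] := ltP a c; last first.
  have ea : a = b by apply/eqP; rewrite eq_le ab (le_trans bc ca).
  by rewrite ea !subrr !mul0r mulr0.
have ca0 : 0 < c - a by rewrite subr_gt0.
set t := (c - b) / (c - a).
have t01 : 0 <= t <= 1.
  by rewrite /t divr_ge0 ?subr_ge0 ?(ltW ac) //= ler_pdivrMr // mul1r; lra.
have eb : b = t * a + (1 - t) * c by rewrite /t; field; rewrite gt_eqF.
have e1 : 1 - t = (b - a) / (c - a) by rewrite /t; field; rewrite gt_eqF.
have := g_convex _ _ _ a0 (le_trans a0 (le_trans ab bc)) t01.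
rewrite -eb e1 /t => /(ler_wpM2r (ltW ca0)).
have -> : ((c - b) / (c - a) * g a + (b - a) / (c - a) * g c) * (c - a)
    = (c - b) * g a + (b - a) * g c by field; rewrite gt_eqF.
lra.
Qed.

Lemma convex_slope4 {u2 w2 u1 w1 : R} : 0 <= u2 -> u2 <= w2 -> w2 <= u1 -> u1 <= w1 ->
  (g w2 - g u2) * (w1 - u1) <= (g w1 - g u1) * (w2 - u2).
Proof.
move=> u20 uw2 wu uw1.
have [w21|w12] := ltP w2 w1; last first.
  have e1 : w1 = w2 by apply/eqP; rewrite eq_le w12 (le_trans wu uw1).
  have e2 : u1 = w1 by apply/eqP; rewrite eq_le uw1 e1 wu.
  by rewrite e2 !subrr mulr0 mul0r.
have w20 := le_trans u20 uw2.
have left := convex_slope3 u20 uw2 (le_trans wu uw1).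
have right : (g w1 - g w2) * (w1 - u1) <= (g w1 - g u1) * (w1 - w2).
  by have := convex_slope3 w20 wu uw1; lra.
have := ler_wpM2r (_ : 0 <= w1 - u1) left; rewrite subr_ge0 => /(_ uw1) h1.
have := ler_wpM2r (_ : 0 <= w2 - u2) right; rewrite subr_ge0 => /(_ uw2) h2.
by rewrite -(ler_pM2r (_ : 0 < w1 - w2)) ?subr_gt0 //; lra.
Qed.

End convex_slope.

(* Log-convexity of psi is exactly convexity of phi_expN phi. *)
Definition phi_expN {R : realType} (phi : R -> R) (v : R) : R := phi (expR (- v)).

Section generator.
Context {R : realType} {psi phi : R -> R}.
Hypotheses (psi_noninc : forall x y : R, 0 <= x -> x <= y -> psi y <= psi x)
  (psi_logconvex : log_convex psi) (phi_inv : is_inverse_gen psi phi).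

Lemma le_of_psi_le {A B : R} : 0 <= A -> 0 <= B -> psi A <= psi B -> B <= A.
Proof.
move=> A0 B0 psiAB; rewrite leNgt; apply/negP => AB.
have e : psi A = psi B by apply/eqP; rewrite eq_le psiAB psi_noninc // ltW.
by move: AB; rewrite -(phi_inv.1 _ A0) e phi_inv.1 // ltxx.
Qed.

Lemma phi_ge0 {u : R} : 0 < u -> u <= 1 -> 0 <= phi u.
Proof. by move=> u0 u1; have [] := phi_inv.2 u; rewrite ?u0. Qed.

Lemma psi_phi {u : R} : 0 < u -> u <= 1 -> psi (phi u) = u.
Proof. by move=> u0 u1; have [] := phi_inv.2 u; rewrite ?u0. Qed.

Lemma phi_noninc {u v : R} : 0 < u -> u <= v -> v <= 1 -> phi v <= phi u.
Proof.
move=> u0 uv v1; have v0 := lt_le_trans u0 uv; have u1 := le_trans uv v1.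
by apply: le_of_psi_le; rewrite ?phi_ge0 ?psi_phi.
Qed.

Let expN_in01 {v : R} : 0 <= v -> 0 < expR (- v) /\ expR (- v) <= 1.
Proof. by move=> v0; rewrite expR_gt0 -expR0 ler_expR lerNl oppr0. Qed.

Lemma phi_expN_ge0 {v : R} : 0 <= v -> 0 <= phi_expN phi v.
Proof. by move=> /expN_in01[? ?]; rewrite phi_ge0. Qed.

Lemma phi_expN_nondecreasing {v w : R} : 0 <= v -> v <= w -> phi_expN phi v <= phi_expN phi w.
Proof.
move=> v0 vw; have [? ?] := expN_in01 v0; have [? ?] := expN_in01 (le_trans v0 vw).
by rewrite /phi_expN phi_noninc // ler_expR lerN2.
Qed.

Lemma phi_expNE {u : R} : 0 < u -> phi u = phi_expN phi (- ln u).
Proof. by move=> u0; rewrite /phi_expN opprK lnK. Qed.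

Lemma phi_expN_convex (x y t : R) : 0 <= x -> 0 <= y -> 0 <= t <= 1 ->
  phi_expN phi (t * x + (1 - t) * y) <= t * phi_expN phi x + (1 - t) * phi_expN phi y.
Proof.
move=> x0 y0 /[dup] t01 /andP [t0 t1].
have comb_ge0 a b : 0 <= a -> 0 <= b -> 0 <= t * a + (1 - t) * b.
  by move=> a0 b0; rewrite addr_ge0 // mulr_ge0 // subr_ge0.
have z0 := comb_ge0 _ _ x0 y0.
have [? ?] := expN_in01 x0; have [? ?] := expN_in01 y0; have [? ?] := expN_in01 z0.
apply: le_of_psi_le; rewrite ?phi_expN_ge0 ?comb_ge0 ?phi_expN_ge0 //.
have := psi_logconvex.2 _ _ _ (phi_expN_ge0 x0) (phi_expN_ge0 y0) t01.
rewrite /phi_expN !psi_phi // !expRK => ln_le.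
have psi_gt0 := psi_logconvex.1 _ (comb_ge0 _ _ (phi_expN_ge0 x0) (phi_expN_ge0 y0)).
by rewrite -(lnK psi_gt0) ler_expR; apply: le_trans ln_le _; lra.
Qed.

End generator.

Lemma ler_mul_of_slope_le {R : realDomainType} (A B x y α β : R) :
  0 <= A -> 0 <= B -> 0 <= x -> 0 <= y -> 0 < α -> 0 <= β -> (x = 0 -> A = 0) ->
  A * y <= B * x -> β * x <= α * y -> β * A <= α * B.
Proof.
move=> A0 B0 x0 y0 /ltW α0 β0 Ax0 AB βα.
have [y_gt0|y_le0] := ltP 0 y; last first.
  have y_eq0 : y = 0 by apply/eqP; rewrite eq_le y_le0 y0.
  move: βα; rewrite y_eq0 mulr0 => βx_le0.
  have /eqP : β * x = 0 by apply/eqP; rewrite eq_le βx_le0 mulr_ge0.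
  by rewrite mulf_eq0 => /orP [/eqP -> | /eqP /Ax0 ->]; rewrite (mul0r, mulr0) mulr_ge0.
rewrite -(ler_pM2r y_gt0) -mulrA (le_trans (ler_wpM2l β0 AB)) //.
by rewrite mulrCA [α * B]mulrC -mulrA; apply: ler_wpM2l.
Qed.

Section rate_sandwich.
Local Open Scope classical_set_scope.
Context {R : realType} {Fhi fhi Flo flo rho : R -> R}.
Hypotheses (hhi : abs_cont_df Fhi fhi) (hlo : abs_cont_df Flo flo)
  (rho_noninc : forall x z : R, 0 < x -> x <= z -> rho z <= rho x)
  (rho_ge0 : forall x : R, 0 < x -> 0 <= rho x)
  (hi_rate : forall x : R, 0 < x -> 0 < Fhi x -> rho x * Fhi x <= fhi x)
  (lo_rate : forall x : R, 0 < x -> 0 < Flo x -> flo x <= rho x * Flo x).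

Lemma Fhi_step {a b : R} : 0 < a -> a <= b -> 0 < Fhi a ->
  Fhi a * (1 + rho b * (b - a)) <= Fhi b.
Proof.
move=> a0 ab Fa_gt0.
suff : rho b * (b - a) * Fhi a <= Fhi b - Fhi a by lra.
apply: (df_increment_ge hhi (ltW a0) ab (rho_ge0 _ (lt_le_trans a0 ab))) => y ay yb.
have y0 := lt_trans a0 ay.
have Fy_gt0 := lt_le_trans Fa_gt0 (df_nondecreasing hhi (ltW ay)).
apply: le_trans (hi_rate _ y0 Fy_gt0).
by rewrite ler_wpM2r ?rho_noninc // ltW.
Qed.

Lemma Flo_step {a b : R} : 0 < a -> a <= b -> 0 < Flo a ->
  Flo b * (1 - rho a * (b - a)) <= Flo a.
Proof.
move=> a0 ab Fa_gt0.
suff : Flo b - Flo a <= rho a * (b - a) * Flo b by lra.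
apply: (df_increment_le hlo (ltW a0) ab (rho_ge0 _ a0)) => y ay yb.
have y0 := lt_trans a0 ay.
have Fy_gt0 := lt_le_trans Fa_gt0 (df_nondecreasing hlo (ltW ay)).
apply: le_trans (lo_rate _ y0 Fy_gt0) _.
by rewrite ler_wpM2r ?rho_noninc ?(df_ge0 hlo) // ltW.
Qed.

Lemma ln_Fhi_increment_ge {a b : R} : 0 < a -> a <= b -> 0 < Fhi a ->
  rho b * (b - a) <= ln (Fhi b) - ln (Fhi a).
Proof.
move=> a0 ab Fa_gt0.
apply: ln_increment_ge_rate ab (rho_ge0 _ (lt_le_trans a0 ab)) _ _.
  by move=> y ay _; apply: lt_le_trans Fa_gt0 (df_nondecreasing hhi ay).
move=> x y ax xy yb; have x0 := lt_le_trans a0 ax.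
apply: le_trans (Fhi_step x0 xy (lt_le_trans Fa_gt0 (df_nondecreasing hhi ax))).
rewrite ler_wpM2l ?(df_ge0 hhi) // lerD2l ler_wpM2r ?subr_ge0 // rho_noninc //.
exact: lt_le_trans xy.
Qed.

Lemma ln_Flo_increment_le {a b : R} : 0 < a -> a <= b -> 0 < Flo a ->
  ln (Flo b) - ln (Flo a) <= rho a * (b - a).
Proof.
move=> a0 ab Fa_gt0.
apply: ln_increment_le_rate ab (rho_ge0 _ a0) _ _.
  by move=> y ay _; apply: lt_le_trans Fa_gt0 (df_nondecreasing hlo ay).
move=> x y ax xy yb; have x0 := lt_le_trans a0 ax.
apply: le_trans (Flo_step x0 xy (lt_le_trans Fa_gt0 (df_nondecreasing hlo ax))).
by rewrite ler_wpM2l ?(df_ge0 hlo) // lerD2l lerN2 ler_wpM2r ?subr_ge0 // rho_noninc.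
Qed.

Lemma Flo_gt0_backward {a b : R} : 0 < a -> a <= b -> 0 < Flo b -> 0 < Flo a.
Proof.
move=> a0 ab; apply: (df_gt0_of_rate_le hlo a0 ab (rho_ge0 _ a0)) => y ay _ Fy_gt0.
have y0 := lt_trans a0 ay.
by apply: le_trans (lo_rate _ y0 Fy_gt0) _; rewrite ler_wpM2r ?rho_noninc // ltW.
Qed.

(* Fhi / Flo is nondecreasing and tends to 1 at +oo. *)
Lemma Fhi_le_Flo {y : R} : 0 < y -> 0 < Fhi y -> 0 < Flo y -> Fhi y <= Flo y.
Proof.
move=> y0 Fhi_gt0 Flo_gt0.
have ratio_ge T : y <= T -> ln (Fhi y) - ln (Flo y) <= Fhi T / Flo T - 1.
  move=> yT.
  have F_gt0 x : y <= x -> x <= T -> 0 < Fhi x /\ 0 < Flo x.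
    move=> yx _; split.
      exact: lt_le_trans Fhi_gt0 (df_nondecreasing hhi yx).
    exact: lt_le_trans Flo_gt0 (df_nondecreasing hlo yx).
  have := @ln_increment_cmp _ y T Fhi Flo rho yT F_gt0
    (fun a b ya ab _ => rho_noninc _ _ (lt_le_trans y0 ya) ab)
    (fun x yx _ => rho_ge0 _ (lt_le_trans y0 yx))
    (fun a b ya ab bT => Fhi_step (lt_le_trans y0 ya) ab (F_gt0 a ya (le_trans ab bT)).1)
    (fun a b ya ab bT => Flo_step (lt_le_trans y0 ya) ab (F_gt0 a ya (le_trans ab bT)).2).
  have [FhiT FloT] := F_gt0 T yT (lexx T).
  have := ln_sub_le_ratio FloT FhiT.
  lra.
have ratio_cvg : (fun T => Fhi T / Flo T - 1) @ +oo --> (0 : R).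
  have -> : (0 : R) = 1 * 1^-1 - 1 by rewrite invr1 mulr1 subrr.
  apply: cvgB; last exact: cvg_cst.
  by apply: cvgM; [exact: hhi.2.2.2.2 | apply: cvgV; [exact: oner_neq0 | exact: hlo.2.2.2.2]].
have : ln (Fhi y) - ln (Flo y) <= 0.
  rewrite -(cvg_lim (@Rhausdorff R) ratio_cvg).
  apply: limr_ge; first by apply/cvg_ex; exists 0.
  by near=> T; apply: ratio_ge; near: T; apply: nbhs_pinfty_ge; exact: num_real.
by rewrite subr_le0 ler_ln ?posrE.
Unshelve. all: by end_near.
Qed.

Context {psi phi : R -> R}.
Hypotheses (psi_noninc : forall x y : R, 0 <= x -> x <= y -> psi y <= psi x)
  (psi_logconvex : log_convex psi) (phi_inv : is_inverse_gen psi phi).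

Lemma phi_exchange_le {α β pa a qb pb : R} : 0 < α -> 0 <= β ->
  0 < pa -> pa <= a -> a <= qb -> qb <= pb -> α * (a - pa) = β * (pb - qb) ->
  0 < Fhi pa -> 0 < Flo qb ->
  β * (phi (Flo qb) - phi (Flo pb)) <= α * (phi (Fhi pa) - phi (Fhi a)).
Proof.
move=> α0 β0 pa0 paa aqb qbpb hαβ Fhi_pa Flo_qb.
have qb0 : 0 < qb by apply: lt_le_trans pa0 (le_trans paa aqb).
have Fhi_a : 0 < Fhi a := lt_le_trans Fhi_pa (df_nondecreasing hhi paa).
have Flo_pb : 0 < Flo pb := lt_le_trans Flo_qb (df_nondecreasing hlo qbpb).
have Fhi_qb : 0 < Fhi qb := lt_le_trans Fhi_a (df_nondecreasing hhi aqb).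
rewrite (phi_expNE Flo_qb) (phi_expNE Flo_pb) (phi_expNE Fhi_pa) (phi_expNE Fhi_a).
set u1 := - ln (Fhi a); set w1 := - ln (Fhi pa).
set u2 := - ln (Flo pb); set w2 := - ln (Flo qb).
have u20 : 0 <= u2 by rewrite oppr_ge0 ln_le0 // (df_le1 hlo).
have uw2 : u2 <= w2 by rewrite lerN2 ler_ln ?posrE // (df_nondecreasing hlo).
have wu : w2 <= u1.
  by rewrite lerN2 ler_ln ?posrE // (le_trans (df_nondecreasing hhi aqb)) // Fhi_le_Flo.
have uw1 : u1 <= w1 by rewrite lerN2 ler_ln ?posrE // (df_nondecreasing hhi).
have G_mono := phi_expN_nondecreasing psi_noninc phi_inv.
apply: (ler_mul_of_slope_le _ _ (w2 - u2) (w1 - u1)); rewrite ?subr_ge0 ?G_mono //.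
- exact: le_trans (le_trans u20 uw2) wu.
- by move=> /eqP; rewrite subr_eq0 => /eqP ->; rewrite subrr.
- exact: (convex_slope4 (phi_expN_convex psi_noninc psi_logconvex phi_inv) u20 uw2 wu uw1).
(* Both log-increments are compared with the common rate rho qb. *)
have lo_inc := ln_Flo_increment_le qb0 qbpb Flo_qb.
have hi_inc := ln_Fhi_increment_ge pa0 paa Fhi_pa.
have rho_qa : rho qb <= rho a := rho_noninc _ _ (lt_le_trans pa0 paa) aqb.
have -> : w2 - u2 = ln (Flo pb) - ln (Flo qb) by rewrite /w2 /u2 opprK addrC.
have -> : w1 - u1 = ln (Fhi a) - ln (Fhi pa) by rewrite /w1 /u1 opprK addrC.
apply: le_trans (ler_wpM2l β0 lo_inc) _.
rewrite mulrCA -hαβ mulrCA ler_wpM2l ?(ltW α0) //.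
by apply: le_trans hi_inc; rewrite ler_wpM2r // subr_ge0.
Qed.

Lemma phi_sum_le {α β pa pb qa qb : R} : 0 < α -> 0 <= β ->
  0 < pa -> pa <= qa -> qa <= qb -> α * pa + β * pb <= α * qa + β * qb ->
  0 < Fhi pa -> 0 < Flo pb ->
  [/\ 0 < Fhi qa, 0 < Flo qb &
      α * phi (Fhi qa) + β * phi (Flo qb) <= α * phi (Fhi pa) + β * phi (Flo pb)].
Proof.
move=> α0 β0 pa0 paqa qaqb sum_le Fhi_pa Flo_pb.
have qb0 : 0 < qb by apply: lt_le_trans pa0 (le_trans paqa qaqb).
have Fhi_qa := lt_le_trans Fhi_pa (df_nondecreasing hhi paqa).
have phi_Fhi_le a b : 0 < Fhi a -> a <= b -> phi (Fhi b) <= phi (Fhi a).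
  by move=> Fa_gt0 ab; rewrite (phi_noninc psi_noninc phi_inv) ?(df_nondecreasing hhi) ?(df_le1 hhi).
have [pbqb|qbpb] := leP pb qb.
  have Flo_qb := lt_le_trans Flo_pb (df_nondecreasing hlo pbqb).
  split => //; apply: lerD; apply: ler_wpM2l; rewrite ?(ltW α0) ?phi_Fhi_le //.
  by rewrite (phi_noninc psi_noninc phi_inv) ?(df_nondecreasing hlo) ?(df_le1 hlo).
have Flo_qb := Flo_gt0_backward qb0 (ltW qbpb) Flo_pb.
split => //.
(* Trade the excess [β (pb - qb)] of the second group for a shift of the first. *)
pose a := pa + β * (pb - qb) / α.
have hαβ : α * (a - pa) = β * (pb - qb) by rewrite /a; field; rewrite gt_eqF.
have paa : pa <= a by rewrite /a lerDl divr_ge0 ?mulr_ge0 ?subr_ge0 ?(ltW qbpb) ?(ltW α0).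
have aqa : a <= qa.
  have : α * (a - pa) <= α * (qa - pa) by rewrite hαβ; lra.
  by rewrite ler_pM2l // lerD2r.
have := phi_exchange_le α0 β0 pa0 paa (le_trans aqa qaqb) (ltW qbpb) hαβ Fhi_pa Flo_qb.
have := ler_wpM2l (ltW α0) (phi_Fhi_le _ _ (lt_le_trans Fhi_pa (df_nondecreasing hhi paa)) aqa).
lra.
Qed.

End rate_sandwich.

Section maxRV.
Local Open Scope classical_set_scope.
Context {R : realType} {d : measure_display} {T : measurableType d} {n : nat}.
Implicit Types (X : 'I_n -> T -> R) (x : R).

Lemma maxRV_ge0 X t : 0 <= maxRV X t.
Proof. exact: bigmax_ge_id. Qed.

Lemma maxRV_gt_neg X x : x < 0 -> [set t | x < maxRV X t] = setT.
Proof.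
by move=> x_lt0; apply/seteqP; split => t //= _; exact: lt_le_trans x_lt0 (maxRV_ge0 _ _).
Qed.

Lemma maxRV_gtE X x : 0 <= x ->
  [set t | x < maxRV X t] = ~` [set t | forall i, X i t <= x].
Proof.
move=> x0; apply/seteqP; split => t /=.
  by move=> + Xx; rewrite ltNge => /negP; apply; apply/bigmax_leP.
move=> Xx; rewrite ltNge; apply/negP => /bigmax_leP [_ Xx']; apply: Xx => i.
exact: Xx'.
Qed.

Lemma measurable_le_lev X (i : 'I_n) x : measurable_fun setT (X i) ->
  measurable [set t | X i t <= x].
Proof.
move=> mX; rewrite -[X in measurable X]setTI.
have -> : [set t | X i t <= x] = X i @^-1` `]-oo, x].
  by apply/seteqP; split => t /=; rewrite in_itv.
exact: mX measurableT _ (measurable_itv _).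
Qed.

Lemma measurable_all_le X x : (forall i, measurable_fun setT (X i)) ->
  measurable [set t | forall i, X i t <= x].
Proof.
move=> mX.
have -> : [set t | forall i, X i t <= x] = \bigcap_(i in [set: 'I_n]) [set t | X i t <= x].
  by apply/seteqP; split => t /= Xx i; [move=> _; exact: Xx | exact: Xx i I].
by apply: fin_bigcap_measurable; [exact: finite_finset | move=> i _; exact: measurable_le_lev].
Qed.

End maxRV.

Section st_le_maxRV.
Local Open Scope classical_set_scope.
Context {R : realType} {d1 d2 : measure_display}
  {T1 : measurableType d1} {T2 : measurableType d2}.

Lemma st_le_maxRV {P1 : probability T1 R} {P2 : probability T2 R} {n : nat}
    {X : 'I_n -> T1 -> R} {Y : 'I_n -> T2 -> R} {G1 G2 : nat -> R -> R} {psi phi : R -> R} :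
  (forall x y, 0 <= x -> x <= y -> psi y <= psi x) ->
  arch_copula_model P1 X G1 psi phi -> arch_copula_model P2 Y G2 psi phi ->
  (forall x, 0 <= x -> (forall i : 'I_n, 0 < G1 i x) ->
     (forall i : 'I_n, 0 < G2 i x) /\ 0 <= \sum_(i < n) phi (G2 i x) /\
     \sum_(i < n) phi (G2 i x) <= \sum_(i < n) phi (G1 i x)) ->
  st_le P2 (maxRV Y) P1 (maxRV X).
Proof.
move=> psi_noninc [mX [margX copX]] [mY [margY copY]] phi_sum_le x.
have [x_lt0|x0] := ltP x 0; first by rewrite !maxRV_gt_neg // !probability_setT.
have mAX := measurable_all_le _ x mX; have mAY := measurable_all_le _ x mY.
rewrite !maxRV_gtE // !probability_setC //; apply: leeB => //.
have [G1_gt0|] := pselect (forall i : 'I_n, 0 < G1 i x).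
  have [G2_gt0 [sum_ge0 sum_le]] := phi_sum_le x x0 G1_gt0.
  by rewrite (copX (fun=> x) G1_gt0) (copY (fun=> x) G2_gt0) lee_fin psi_noninc.
move=> /existsNP [i /negP]; rewrite -leNgt => G1i_le0.
apply: (@le_trans _ _ (P1 [set t | X i t <= x])).
  have mXi := measurable_le_lev _ i x (mX i).
  by apply: le_measure; rewrite ?inE // => t /(_ i).
by rewrite margX (@le_trans _ _ 0%E) ?lee_fin.
Qed.

End st_le_maxRV.

Section two_groups.
Context {R : realType}.

Lemma sum_mix_df (g F1 F2 : R -> R) (n1 n2 : nat) (l1 l2 x : R) :
  \sum_(i < n1 + n2) g (mix_df F1 F2 n1 l1 l2 i x) =
  n1%:R * g (F1 (l1 * x)) + n2%:R * g (F2 (l2 * x)).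
Proof.
rewrite big_split_ord /=.
under eq_bigr => i _ do rewrite /mix_df /= ltn_ord.
under [X in _ + X]eq_bigr => i _ do rewrite /mix_df /= ltnNge leq_addr.
by rewrite !sumr_const !card_ord !mulr_natl.
Qed.

Lemma sum_nth_nseq_cat (k1 k2 : nat) (a b : R) :
  \sum_(i < k1 + k2) nth 0 (nseq k1 a ++ nseq k2 b) i = k1%:R * a + k2%:R * b.
Proof.
rewrite big_split_ord /=.
under eq_bigr => i _ do rewrite /= nth_cat size_nseq ltn_ord nth_nseq ltn_ord.
under [X in _ + X]eq_bigr => i _ do
  rewrite /= nth_cat size_nseq ltnNge leq_addr /= addKn nth_nseq ltn_ord.
by rewrite !sumr_const !card_ord !mulr_natl.
Qed.

Lemma sort_nseq_cat (k1 k2 : nat) (a b : R) : a <= b ->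
  sort <=%R (nseq k1 a ++ nseq k2 b) = nseq k1 a ++ nseq k2 b.
Proof.
move=> ab; apply: (sorted_sort le_trans).
have sorted_nseq k (c : R) t :
    all (>= c) t -> sorted <=%R t -> sorted <=%R (nseq k c ++ t).
  move=> ct st; elim: k => [|k IH] //=.
  rewrite (path_sortedE le_trans) IH andbT all_cat ct andbT.
  by apply/allP => y /nseqP [->].
apply: (sorted_nseq); first by apply/allP => y /nseqP [->].
by rewrite -[nseq k2 b]cats0; apply: sorted_nseq.
Qed.

Lemma wsupmaj_nseq_cat {k1 k2 : nat} {a b c d : R} : (0 < k1)%N -> a <= b -> c <= d ->
  wsupmaj (nseq k1 a ++ nseq k2 b) (nseq k1 c ++ nseq k2 d) ->
  a <= c /\ k1%:R * a + k2%:R * b <= k1%:R * c + k2%:R * d.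
Proof.
move=> k1_gt0 ab cd [_]; rewrite !sort_nseq_cat // size_cat !size_nseq => partial_le.
split; last by have := partial_le _ (leqnn _); rewrite !sum_nth_nseq_cat.
have := partial_le 1%N; rewrite !big_ord1.
by case: k1 k1_gt0 {partial_le} => // k _ /=; apply; rewrite addSn.
Qed.

Lemma wsupmaj_perm {a a' b b' : seq R} : perm_eq a a' -> perm_eq b b' ->
  wsupmaj a b -> wsupmaj a' b'.
Proof.
move=> pa pb [size_ab partial_le].
have sort_perm (s s' : seq R) : perm_eq s s' -> sort <=%R s = sort <=%R s'.
  by move=> ss'; apply/perm_sortP => //; [exact: le_total | exact: le_trans | exact: le_anti].
split; first by rewrite -(perm_size pa) -(perm_size pb).
by move=> l; rewrite -(sort_perm _ _ pa) -(sort_perm _ _ pb) -(perm_size pa); apply: partial_le.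
Qed.

End two_groups.

Definition rate_between {R : realType} (rho Fhi fhi Flo flo : R -> R) : Prop :=
  [/\ forall x z, 0 < x -> x <= z -> rho z <= rho x,
      forall x, 0 < x -> 0 <= rho x,
      forall x, 0 < x -> 0 < Fhi x -> rho x * Fhi x <= fhi x &
      forall x, 0 < x -> 0 < Flo x -> flo x <= rho x * Flo x].

Section rev_hazard.
Context {R : realType} {Fhi fhi Flo flo : R -> R}.
Hypotheses (hhi : abs_cont_df Fhi fhi) (hlo : abs_cont_df Flo flo).

Let rev_hazardK {F f : R -> R} x : 0 < F x -> rev_hazard F f x * F x = f x.
Proof. by move=> Fx_gt0; rewrite /rev_hazard divfK ?gt_eqF. Qed.

Let rev_hazard_ge0 {F f : R -> R} x : abs_cont_df F f -> 0 <= rev_hazard F f x.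
Proof. by move=> hF; rewrite /rev_hazard divr_ge0 ?(df_ge0 hF) //; case: hF => _ []. Qed.

Lemma rate_between_rev_hazard :
  decreasing_pos (rev_hazard Fhi fhi) \/ decreasing_pos (rev_hazard Flo flo) ->
  (forall x, 0 < x -> rev_hazard Flo flo x <= rev_hazard Fhi fhi x) ->
  exists rho, rate_between rho Fhi fhi Flo flo.
Proof.
move=> [hi_dec|lo_dec] lo_le_hi.
  exists (rev_hazard Fhi fhi); split => // [x _|x _ Fx|x x0 Fx]; first exact: rev_hazard_ge0 hhi.
    by rewrite rev_hazardK.
  by rewrite -(rev_hazardK (f := flo) x Fx) ler_wpM2r ?lo_le_hi ?(ltW Fx).
exists (rev_hazard Flo flo); split => // [x _|x x0 Fx|x _ Fx]; first exact: rev_hazard_ge0 hlo.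
  by rewrite -(rev_hazardK (f := fhi) x Fx) ler_wpM2r ?lo_le_hi ?(ltW Fx).
by rewrite rev_hazardK.
Qed.

End rev_hazard.

Lemma scaled_phi_sum_le {R : realType} {psi phi rho Fhi fhi Flo flo : R -> R}
    {α β la lb ma mb x : R} :
  (forall x y, 0 <= x -> x <= y -> psi y <= psi x) -> log_convex psi ->
  is_inverse_gen psi phi -> abs_cont_df Fhi fhi -> abs_cont_df Flo flo ->
  rate_between rho Fhi fhi Flo flo ->
  0 < α -> 0 <= β -> 0 < la -> la <= ma -> ma <= mb ->
  α * la + β * lb <= α * ma + β * mb ->
  0 < x -> 0 < Fhi (la * x) -> 0 < Flo (lb * x) ->
  [/\ 0 < Fhi (ma * x), 0 < Flo (mb * x) &
      α * phi (Fhi (ma * x)) + β * phi (Flo (mb * x))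
        <= α * phi (Fhi (la * x)) + β * phi (Flo (lb * x))].
Proof.
move=> psi_noninc psi_lc phi_inv hhi hlo [rho_noninc rho_ge0 hi_rate lo_rate].
move=> α0 β0 la0 lama mamb sum_le x0.
have scale y z : y <= z -> y * x <= z * x by move=> yz; rewrite ler_pM2r.
apply: (phi_sum_le hhi hlo rho_noninc rho_ge0 hi_rate lo_rate psi_noninc psi_lc phi_inv)
  => //; rewrite ?mulr_gt0 ?scale //.
by have := scale _ _ sum_le; rewrite !mulrDl -!mulrA.
Qed.

Lemma st_le_maxRV_mix {R : realType} {d1 d2 : measure_display}
    {T1 : measurableType d1} {T2 : measurableType d2}
    {P1 : probability T1 R} {P2 : probability T2 R} {n1 n2 : nat}
    {psi phi F1 F2 f1 f2 : R -> R} {l1 l2 m1 m2 : R}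
    {X : 'I_(n1 + n2) -> T1 -> R} {Y : 'I_(n1 + n2) -> T2 -> R} :
  (0 < n1)%N -> (0 < n2)%N -> (forall x y, 0 <= x -> x <= y -> psi y <= psi x) ->
  is_inverse_gen psi phi -> abs_cont_df F1 f1 -> abs_cont_df F2 f2 ->
  arch_copula_model P1 X (mix_df F1 F2 n1 l1 l2) psi phi ->
  arch_copula_model P2 Y (mix_df F1 F2 n1 m1 m2) psi phi ->
  (forall x, 0 < x -> 0 < F1 (l1 * x) -> 0 < F2 (l2 * x) ->
     [/\ 0 < F1 (m1 * x), 0 < F2 (m2 * x) &
         n1%:R * phi (F1 (m1 * x)) + n2%:R * phi (F2 (m2 * x))
           <= n1%:R * phi (F1 (l1 * x)) + n2%:R * phi (F2 (l2 * x))]) ->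
  st_le P2 (maxRV Y) P1 (maxRV X).
Proof.
move=> n1_gt0 n2_gt0 psi_noninc phi_inv hF1 hF2 hX hY phi_mix_le.
apply: (st_le_maxRV psi_noninc hX hY) => x x0 G_gt0.
have F1_gt0 : 0 < F1 (l1 * x).
  by have := G_gt0 (lshift n2 (Ordinal n1_gt0)); rewrite /mix_df /= n1_gt0.
have F2_gt0 : 0 < F2 (l2 * x).
  by have := G_gt0 (rshift n1 (Ordinal n2_gt0)); rewrite /mix_df /= ltnNge leq_addr.
have x_gt0 : 0 < x.
  rewrite lt_def x0 andbT; apply/eqP => x_eq0.
  by move: F1_gt0; rewrite x_eq0 mulr0 (df0 hF1) ltxx.
have [F1_gt0' F2_gt0' sum_le] := phi_mix_le x x_gt0 F1_gt0 F2_gt0.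
split; first by move=> i; rewrite /mix_df; case: ifP.
rewrite !sum_mix_df; split => //.
by rewrite addr_ge0 // mulr_ge0 ?ler0n // (phi_ge0 phi_inv) ?(df_le1 hF1) ?(df_le1 hF2).
Qed.

Theorem corollary3p1 (R : realType) (n1 n2 : nat)
  (psi phi : R -> R) (F1 F2 f1 f2 : R -> R) (l1 l2 m1 m2 : R)
  (d1 d2 : measure_display) (T1 : measurableType d1) (T2 : measurableType d2)
  (P1 : probability T1 R) (P2 : probability T2 R)
  (X : 'I_(n1 + n2) -> T1 -> R) (Y : 'I_(n1 + n2) -> T2 -> R) :
  (1 <= n1)%N -> (1 <= n2)%N ->
  arch_generator (n1 + n2) psi -> log_convex psi -> is_inverse_gen psi phi ->
  abs_cont_df F1 f1 -> abs_cont_df F2 f2 ->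
  0 < l1 -> 0 < l2 -> 0 < m1 -> 0 < m2 ->
  (forall i t, 0 <= X i t) -> (forall i t, 0 <= Y i t) ->
  arch_copula_model P1 X (mix_df F1 F2 n1 l1 l2) psi phi ->
  arch_copula_model P2 Y (mix_df F1 F2 n1 m1 m2) psi phi ->
  let lstar := nseq n1 l1 ++ nseq n2 l2 in
  let mstar := nseq n1 m1 ++ nseq n2 m2 in
  let r1 := rev_hazard F1 f1 in
  let r2 := rev_hazard F2 f2 in
  let concl := st_le P2 (maxRV Y) P1 (maxRV X) in
  (* case (a) *)
  ((n2 <= n1)%N -> l1 <= l2 -> m1 <= m2 ->
     ((decreasing_pos r1 \/ decreasing_pos r2) ->
        (forall x, 0 < x -> r2 x <= r1 x) ->
        wsupmaj lstar mstar -> concl) /\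
     ((forall x, 0 < x -> r1 x = r2 x) -> decreasing_pos r1 ->
        wsupmaj lstar mstar -> concl)) /\
  (* case (b) *)
  ((n1 <= n2)%N -> l2 <= l1 -> m2 <= m1 ->
     ((decreasing_pos r1 \/ decreasing_pos r2) ->
        (forall x, 0 < x -> r1 x <= r2 x) ->
        wsupmaj lstar mstar -> concl) /\
     ((forall x, 0 < x -> r1 x = r2 x) -> decreasing_pos r1 ->
        wsupmaj lstar mstar -> concl)).
Proof.
move=> n1_gt0 n2_gt0 [_ [psi_noninc _]] psi_lc phi_inv hF1 hF2 l1_gt0 l2_gt0 _ _ _ _ hX hY.
move=> lstar mstar r1 r2 concl.
have st_le := st_le_maxRV_mix n1_gt0 n2_gt0 psi_noninc phi_inv hF1 hF2 hX hY.
have weights k : (0 < k)%N -> 0 < k%:R :> R by rewrite ltr0n.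
have case_a : (exists rho, rate_between rho F1 f1 F2 f2) -> l1 <= l2 -> m1 <= m2 ->
    wsupmaj lstar mstar -> concl.
  move=> [rho hrho] l12 m12 /(wsupmaj_nseq_cat n1_gt0 l12 m12) [l1m1 sum_le].
  by apply: st_le => x x0; apply: (scaled_phi_sum_le psi_noninc psi_lc phi_inv hF1 hF2 hrho) (weights _ n1_gt0) (ler0n _ _) _ _ _ _ x0.
have case_b : (exists rho, rate_between rho F2 f2 F1 f1) -> l2 <= l1 -> m2 <= m1 ->
    wsupmaj lstar mstar -> concl.
  move=> [rho hrho] l21 m21 /(wsupmaj_perm (permEl (perm_catC _ _)) (permEl (perm_catC _ _))).
  move=> /(wsupmaj_nseq_cat n2_gt0 l21 m21) [l2m2 sum_le].
  apply: st_le => x x0 F1_gt0 F2_gt0.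
  have [? ?] := scaled_phi_sum_le psi_noninc psi_lc phi_inv hF2 hF1 hrho (weights _ n2_gt0) (ler0n _ _) l2_gt0 l2m2 m21 sum_le
    x0 F2_gt0 F1_gt0.
  by rewrite addrC [X in _ <= X]addrC.
split=> _ l_le m_le; split => [hdec r_le | r_eq hdec].
- by apply: case_a => //; apply: rate_between_rev_hazard hF1 hF2 hdec r_le.
- apply: case_a => //; apply: rate_between_rev_hazard hF1 hF2 (or_introl hdec) _ => x x0.
  by rewrite -/r1 -/r2 r_eq.
- apply: case_b => //; apply: rate_between_rev_hazard hF2 hF1 _ r_le.
  by case: hdec; [right | left].
- apply: case_b => //; apply: rate_between_rev_hazard hF2 hF1 (or_intror hdec) _ => x x0.
  by rewrite -/r1 -/r2 r_eq.
Qed.
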